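(* Let $\div$ be a belief change operator satisfying (C1)–(C7) and (C8), (C9). Then the following are equivalent: (a) $\div$ satisfies, for all epistemic states $\Psi$ and formulas $\alpha,\beta,\gamma$: (C10) if $\neg\alpha\models\gamma$ then $\Psi\div\beta\models\gamma$ implies $\Psi\div\alpha\div\beta\models\gamma$; and (C11) if $\alpha\models\gamma$ then $\Psi\div\alpha\div\beta\models\gamma$ implies $\Psi\div\beta\models\gamma$. (b) There is a faithful assignment $\Psi\mapsto\le_\Psi$ with $[\![\Psi\div\alpha]\!]=[\![\Psi]\!]\cup\min([\![\neg\alpha]\!],\le_\Psi)$ for all $\Psi,\alpha$, which satisfies for all $\Psi,\alpha$ and worlds $\omega_1\in[\![\neg\alpha]\!]$, $\omega_2\in[\![\alpha]\!]$: (CR10) $\omega_1<_\Psi\omega_2\Rightarrow\omega_1<_{\Psi\div\alpha}\omega_2$; (CR11) $\omega_1\le_\Psi\omega_2\Rightarrow\omega_1\le_{\Psi\div\alpha}\omega_2$.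
   Context: $\Sigma$ is a nonempty finite set of propositional variables, $\mathcal{L}$ the propositional language over $\Sigma$, $\Omega$ the set of worlds. $[\![\alpha]\!]$ is the set of models of $\alpha$; for a set $X$ of formulas $[\![X]\!]$ is the set of worlds satisfying all of $X$; $Cn(X)=\{\beta\mid X\models\beta\}$. $\mathcal{E}$ is a set of epistemic states; each $\Psi\in\mathcal{E}$ has a deductively closed belief set $\mathrm{Bel}(\Psi)\subseteq\mathcal{L}$; $\Psi\models\alpha$ iff $\alpha\in\mathrm{Bel}(\Psi)$; $[\![\Psi]\!]=[\![\mathrm{Bel}(\Psi)]\!]$. A belief change operator is a map $\div:\mathcal{E}\times\mathcal{L}\to\mathcal{E}$; $\Psi\div\alpha\div\beta$ means $(\Psi\div\alpha)\div\beta$. Postulates, for all $\Psi,\alpha,\beta$: (C1) $\mathrm{Bel}(\Psi\div\alpha)\subseteq\mathrm{Bel}(\Psi)$; (C2) if $\alpha\notin\mathrm{Bel}(\Psi)$ then $\mathrm{Bel}(\Psi)\subseteq\mathrm{Bel}(\Psi\div\alpha)$; (C3) if $\alpha\not\equiv\top$ then $\alpha\notin\mathrm{Bel}(\Psi\div\alpha)$; (C4) $\mathrm{Bel}(\Psi)\subseteq Cn(\mathrm{Bel}(\Psi\div\alpha)\cup\{\alpha\})$; (C5) if $\alpha\equiv\beta$ then $\mathrm{Bel}(\Psi\div\alpha)=\mathrm{Bel}(\Psi\div\beta)$; (C6) $\mathrm{Bel}(\Psi\div\alpha)\cap\mathrm{Bel}(\Psi\div\beta)\subseteq\mathrm{Bel}(\Psi\div(\alpha\land\beta))$;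 (C7) if $\beta\notin\mathrm{Bel}(\Psi\div(\alpha\land\beta))$ then $\mathrm{Bel}(\Psi\div(\alpha\land\beta))\subseteq\mathrm{Bel}(\Psi\div\beta)$; (C8) if $\neg\alpha\models\beta$ then $\mathrm{Bel}(\Psi\div\alpha\div\beta) =_\alpha \mathrm{Bel}(\Psi\div\beta)$; (C9) if $\alpha\models\beta$ then $\mathrm{Bel}(\Psi\div\alpha\div\beta) =_{\neg\beta} \mathrm{Bel}(\Psi\div\beta)$. A belief change operator satisfying (C1)–(C7) is called an AGM contraction operator for epistemic states. For a total preorder $\le$ on $\Omega$ and $\Omega'\subseteq\Omega$, $\min(\Omega',\le)=\{\omega\in\Omega'\mid \omega\le\omega' \text{ for all }\omega'\in\Omega'\}$; $<$ is the strict part and $\simeq$ the induced equivalence. A faithful assignment maps each $\Psi$ to a total preorder $\le_\Psi$ on $\Omega$ with (FA1) $\omega_1,\omega_2\in[\![\Psi]\!]\Rightarrow\omega_1\simeq_\Psi\omega_2$ and (FA2) $\omega_1\in[\![\Psi]\!],\omega_2\notin[\![\Psi]\!]\Rightarrow\omega_1<_\Psi\omega_2$. Known fact: $\div$ satisfies (C1)–(C7) iff there is a faithful assignment with $[\![\Psi\div\alpha]\!]=[\![\Psi]\!]\cup\min([\![\neg\alpha]\!],\le_\Psi)$ for all $\Psi,\alpha$. $\alpha$-equivalence: for $\Omega_1,\Omega_2\subseteq\Omega$, $\Omega_1=_\alpha\Omega_2$ iff $\Omega_1\cap[\![\alpha]\!]=\Omega_2\cap[\![\alpha]\!]$; for sets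 of formulas $X=_\alpha Y$ iff $[\![X]\!]=_\alpha[\![Y]\!]$. *)

From mathcomp Require Import all_boot.
Set Implicit Arguments. Unset Strict Implicit. Unset Printing Implicit Defensive.

Section Logic.
Variable Sigma : finType.

Inductive form : Type :=
| fVar : Sigma -> form
| fTop : form
| fBot : form
| fNeg : form -> form
| fAnd : form -> form -> form
| fOr  : form -> form -> form
| fImp : form -> form -> form.

Definition world := Sigma -> bool.

Fixpoint sat (w : world) (f : form) : bool :=
  match f with
  | fVar x => w x
  | fTop => true
  | fBot => false
  | fNeg g => ~~ sat w g
  | fAnd g h => sat w g && sat w h
  | fOr g h => sat w g || sat w h
  | fImp g h => sat w g ==> sat w h
  end.

Definition fset := form -> Prop.

Definition modsX (X : fset) (w : world) : Prop := forall f, X f -> sat w f.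

Definition entailsX (X : fset) (b : form) : Prop :=
  forall w, modsX X w -> sat w b.
Definition Cn (X : fset) : fset := fun b => entailsX X b.

Definition deductively_closed (X : fset) : Prop := forall b, entailsX X b -> X b.

Definition fentails (a b : form) : Prop := forall w, sat w a -> sat w b.
Definition fequiv (a b : form) : Prop := forall w, sat w a = sat w b.
Definition tautology (a : form) : Prop := forall w, sat w a.

Definition subsetF (X Y : fset) : Prop := forall f, X f -> Y f.
Definition unionF (X : fset) (a : form) : fset := fun f => X f \/ f = a.
Definition interF (X Y : fset) : fset := fun f => X f /\ Y f.

Definition aequivF (a : form) (X Y : fset) : Prop :=
  forall w, sat w a -> (modsX X w <-> modsX Y w).

Definition total_preorder (le : world -> world -> Prop) : Prop :=
  (forall w1 w2 w3, le w1 w2 -> le w2 w3 -> le w1 w3) /\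
  (forall w1 w2, le w1 w2 \/ le w2 w1).
Definition strict (le : world -> world -> Prop) (w1 w2 : world) : Prop :=
  le w1 w2 /\ ~ le w2 w1.
Definition min_set (O : world -> Prop) (le : world -> world -> Prop)
  (w : world) : Prop := O w /\ forall w', O w' -> le w w'.

Section Operator.
Variable E : Type.
Variable Bel : E -> fset.
Variable contr : E -> form -> E.

Definition modsE (Psi : E) : world -> Prop := modsX (Bel Psi).

Definition C1 := forall Psi a, subsetF (Bel (contr Psi a)) (Bel Psi).
Definition C2 := forall Psi a, ~ Bel Psi a -> subsetF (Bel Psi) (Bel (contr Psi a)).
Definition C3 := forall Psi a, ~ tautology a -> ~ Bel (contr Psi a) a.
Definition C4 := forall Psi a, subsetF (Bel Psi) (Cn (unionF (Bel (contr Psi a)) a)).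
Definition C5 := forall Psi a b, fequiv a b ->
  (forall f, Bel (contr Psi a) f <-> Bel (contr Psi b) f).
Definition C6 := forall Psi a b,
  subsetF (interF (Bel (contr Psi a)) (Bel (contr Psi b))) (Bel (contr Psi (fAnd a b))).
Definition C7 := forall Psi a b, ~ Bel (contr Psi (fAnd a b)) b ->
  subsetF (Bel (contr Psi (fAnd a b))) (Bel (contr Psi b)).
Definition C8 := forall Psi a b, fentails (fNeg a) b ->
  aequivF a (Bel (contr (contr Psi a) b)) (Bel (contr Psi b)).
Definition C9 := forall Psi a b, fentails a b ->
  aequivF (fNeg b) (Bel (contr (contr Psi a) b)) (Bel (contr Psi b)).
Definition C10 := forall Psi a b g, fentails (fNeg a) g ->
  Bel (contr Psi b) g -> Bel (contr (contr Psi a) b) g.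
Definition C11 := forall Psi a b g, fentails a g ->
  Bel (contr (contr Psi a) b) g -> Bel (contr Psi b) g.

Definition AGM_contraction := C1 /\ C2 /\ C3 /\ C4 /\ C5 /\ C6 /\ C7.

Definition faithful_assignment (le : E -> world -> world -> Prop) : Prop :=
  (forall Psi, total_preorder (le Psi)) /\
  (forall Psi w1 w2, modsE Psi w1 -> modsE Psi w2 -> le Psi w1 w2 /\ le Psi w2 w1) /\
  (forall Psi w1 w2, modsE Psi w1 -> ~ modsE Psi w2 -> strict (le Psi) w1 w2).

Definition represents (le : E -> world -> world -> Prop) : Prop :=
  forall Psi a w, modsE (contr Psi a) w <->
    (modsE Psi w \/ min_set (fun w' => sat w' (fNeg a)) (le Psi) w).

Definition CR10 (le : E -> world -> world -> Prop) : Prop :=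
  forall Psi a w1 w2, sat w1 (fNeg a) -> sat w2 a ->
    strict (le Psi) w1 w2 -> strict (le (contr Psi a)) w1 w2.
Definition CR11 (le : E -> world -> world -> Prop) : Prop :=
  forall Psi a w1 w2, sat w1 (fNeg a) -> sat w2 a ->
    le Psi w1 w2 -> le (contr Psi a) w1 w2.

End Operator.
End Logic.

(* Let [w1 <=_Psi w2] hold when w1 is a model of the contraction of Psi by
   the formula true everywhere except at w1 and w2.  Under (C1)-(C7) this is a
   faithful total preorder representing the operator, and any faithful
   representing assignment coincides with it; so (b) only depends on the
   operator.  Read on such two-world formulas, (C10)/(C11) are exactly
   (CR10)/(CR11), while (C8)/(C9) say that contracting by alpha does not change
   the comparisons inside [[alpha]] (resp. [[~alpha]]); these are the cases not
   covered by (CR10)/(CR11) when the orders are used to recover (C10)/(C11). *)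
From Stdlib Require Import Classical FunctionalExtensionality.
From mathcomp Require Import all_boot.

Set Implicit Arguments.
Unset Strict Implicit.
Unset Printing Implicit Defensive.

Section CharacteristicFormulas.
Variable Sigma : finType.

Definition fliteral (w : world Sigma) (x : Sigma) : form Sigma :=
  if w x then fVar x else fNeg (fVar x).

Definition fchar (w : world Sigma) : form Sigma :=
  foldr (fun x f => fAnd (fliteral w x) f) (fTop Sigma) (enum Sigma).

Definition fexcept (w1 w2 : world Sigma) : form Sigma :=
  fAnd (fNeg (fchar w1)) (fNeg (fchar w2)).

Lemma sat_fchar (v w : world Sigma) : sat v (fchar w) <-> v = w.
Proof.
have -> : sat v (fchar w) = all (fun x => v x == w x) (enum Sigma).
  rewrite /fchar; elim: (enum Sigma) => [//|x s IH].
  by rewrite /= IH /fliteral; case: (w x) => /=; case: (v x).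
split => [/allP Hvw | ->]; last exact/allP.
by apply: functional_extensionality => x; apply/eqP/Hvw; rewrite mem_enum.
Qed.

Lemma sat_fexcept (v w1 w2 : world Sigma) :
  sat v (fexcept w1 w2) <-> v <> w1 /\ v <> w2.
Proof.
rewrite /=; split.
- by case/andP=> /negP H1 /negP H2; split=> Hv; [apply: H1 | apply: H2]; apply/sat_fchar.
- by case=> H1 H2; apply/andP; split; apply/negP=> /sat_fchar.
Qed.

Lemma nsat_fexcept (v w1 w2 : world Sigma) :
  ~~ sat v (fexcept w1 w2) <-> v = w1 \/ v = w2.
Proof.
split=> [/negP Hv | Hv]; last by apply/negP=> /sat_fexcept [H1 H2]; case: Hv.
by apply: NNPP=> Hne; apply/Hv/sat_fexcept; split=> Heq; apply: Hne; [left | right].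
Qed.

Lemma fexceptC (w1 w2 : world Sigma) : fequiv (fexcept w1 w2) (fexcept w2 w1).
Proof. by move=> v; rewrite /= andbC. Qed.

Lemma fentails_fexcept (a : form Sigma) (w1 w2 : world Sigma) :
  ~~ sat w1 a -> ~~ sat w2 a -> fentails a (fexcept w1 w2).
Proof. by move=> H1 H2 v Hv; apply/sat_fexcept; split=> Hvw; subst v; rewrite Hv in H1 H2. Qed.

End CharacteristicFormulas.

Section Contraction.
Variables (Sigma : finType) (E : Type) (Bel : E -> fset Sigma).
Variable contr : E -> form Sigma -> E.
Hypothesis Hclosed : forall Psi, deductively_closed (Bel Psi).

Notation mods := (modsE Bel).

Lemma not_modsE Psi w : ~ mods Psi w -> exists f, Bel Psi f /\ ~ sat w f.
Proof.
move=> Hw; apply: NNPP=> Hno; apply: Hw => f Hf.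
by apply: NNPP=> Hf'; apply: Hno; exists f.
Qed.

Lemma C10_mods : C10 Bel contr <->
  forall Psi a b w, mods (contr (contr Psi a) b) w -> sat w a -> mods (contr Psi b) w.
Proof.
split=> [H10 Psi a b w Hw Ha f Hf | Hmods Psi a b g Hag Hbg].
- have : sat w (fOr f (fNeg a)).
    apply: Hw; apply: H10; first by move=> v /= ->; rewrite orbT.
    by apply: Hclosed => v Hv /=; rewrite (Hv f Hf).
  by rewrite /= Ha orbF.
- apply: Hclosed => w Hw; case: (boolP (sat w a)) => Ha; last exact: Hag.
  exact: (Hmods _ _ _ _ Hw Ha).
Qed.

Lemma C11_mods : C11 Bel contr <->
  forall Psi a b w, mods (contr Psi b) w -> ~~ sat w a -> mods (contr (contr Psi a) b) w.
Proof.
split=> [H11 Psi a b w Hw Ha f Hf | Hmods Psi a b g Hag Hbg].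
- have : sat w (fOr f a).
    apply: Hw; apply: (H11 Psi a); first by move=> v /= ->; rewrite orbT.
    by apply: Hclosed => v Hv /=; rewrite (Hv f Hf).
  by rewrite /= (negbTE Ha) orbF.
- apply: Hclosed => w Hw; case: (boolP (sat w a)) => Ha; first exact: Hag.
  exact: (Hmods _ _ _ _ Hw Ha).
Qed.

Section AGM.
Hypotheses (H1 : C1 Bel contr) (H2 : C2 Bel contr) (H3 : C3 Bel contr).
Hypotheses (H4 : C4 Bel contr) (H5 : C5 Bel contr) (H6 : C6 Bel contr).
Hypothesis (H7 : C7 Bel contr).

Lemma mods_contr Psi a w : mods Psi w -> mods (contr Psi a) w.
Proof. by move=> Hw f Hf; apply: Hw; apply: H1 Hf. Qed.

Lemma mods_contr_vacuous Psi a w0 w :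
  mods Psi w0 -> ~~ sat w0 a -> mods (contr Psi a) w -> mods Psi w.
Proof.
move=> Hw0 Ha Hw f Hf; apply: Hw; apply: H2 Hf => Hbel.
by move: (Hw0 a Hbel); rewrite (negbTE Ha).
Qed.

Lemma mods_contr_success Psi a w0 :
  ~~ sat w0 a -> exists2 w, mods (contr Psi a) w & ~~ sat w a.
Proof.
move=> Ha0; apply: NNPP=> Hno; apply: (H3 (Psi := Psi) (a := a)) => [Htaut|].
  by move: (Htaut w0); rewrite (negbTE Ha0).
by apply: Hclosed => w Hw; apply: NNPP=> /negP Ha; apply: Hno; exists w.
Qed.

Lemma mods_contr_recovery Psi a w : mods (contr Psi a) w -> sat w a -> mods Psi w.
Proof. by move=> Hw Ha f Hf; apply: (H4 Hf) => g [/Hw | ->]. Qed.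

Lemma mods_contr_equiv Psi a b w :
  fequiv a b -> mods (contr Psi a) w -> mods (contr Psi b) w.
Proof. by move=> Hab Hw f Hf; apply: Hw; apply/(H5 Psi Hab). Qed.

Lemma mods_contr_conj Psi a b w :
  mods (contr Psi (fAnd a b)) w -> mods (contr Psi a) w \/ mods (contr Psi b) w.
Proof.
move=> Hw; apply: NNPP=> Hno.
have [f [Hf Hwf]] := not_modsE (fun H => Hno (or_introl H)).
have [g [Hg Hwg]] := not_modsE (fun H => Hno (or_intror H)).
have : sat w (fOr f g).
  apply: Hw; apply: H6; split; apply: Hclosed => v Hv /=.
  - by rewrite (Hv f Hf).
  - by rewrite (Hv g Hg) orbT.
by case/orP.
Qed.

Lemma mods_contr_weaker Psi a b w :
  fentails b a -> mods (contr Psi b) w -> ~~ sat w a -> mods (contr Psi a) w.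
Proof.
move=> Hba Hw Ha.
have Hb : fequiv b (fAnd a (fOr b (fNeg a))).
  by move=> v /=; move: (Hba v); case: (sat v b); case: (sat v a) => // ->.
case: (mods_contr_conj (mods_contr_equiv Hb Hw)) => // Hw'.
by apply/mods_contr/(mods_contr_recovery Hw'); rewrite /= Ha orbT.
Qed.

Lemma mods_contr_stronger Psi a b w0 w :
  fentails b a -> mods (contr Psi b) w0 -> ~~ sat w0 a ->
  mods (contr Psi a) w -> mods (contr Psi b) w.
Proof.
move=> Hba Hw0 Ha0 Hw.
have Hb : fequiv (fAnd b a) b.
  by move=> v /=; move: (Hba v); case: (sat v b); case: (sat v a) => // ->.
have Hw0' : mods (contr Psi (fAnd b a)) w0.
  by apply: (mods_contr_equiv _ Hw0) => v; rewrite Hb.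
apply: (mods_contr_equiv Hb) => f Hf; apply: Hw; apply: H7 Hf => Hbel.
by move: (Hw0' a Hbel); rewrite (negbTE Ha0).
Qed.

Definition contr_order Psi (w1 w2 : world Sigma) : Prop :=
  mods (contr Psi (fexcept w1 w2)) w1.

Lemma contr_order_trans Psi w1 w2 w3 :
  contr_order Psi w1 w2 -> contr_order Psi w2 w3 -> contr_order Psi w1 w3.
Proof.
rewrite /contr_order => H12 H23.
set a := fAnd (fexcept w1 w2) (fNeg (fchar w3)).
have sat_a v : sat v a <-> [/\ v <> w1, v <> w2 & v <> w3].
  split=> [/andP [/sat_fexcept [? ?] /negP Hv3] | [? ? Hv3]].
    by split=> // Hv; apply/Hv3/sat_fchar.
  by apply/andP; split; [apply/sat_fexcept | apply/negP=> /sat_fchar].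
have Hw1a : ~~ sat w1 a by apply/negP=> /sat_a [].
have Ha12 : fentails a (fexcept w1 w2) by move=> v /sat_a [? ? ?]; apply/sat_fexcept.
have Ha13 : fentails a (fexcept w1 w3) by move=> v /sat_a [? ? ?]; apply/sat_fexcept.
have Ha23 : fentails a (fexcept w2 w3) by move=> v /sat_a [? ? ?]; apply/sat_fexcept.
have step3 : mods (contr Psi a) w3 -> mods (contr Psi a) w2.
  by move=> Hw3; apply: (mods_contr_stronger Ha23 Hw3 _ H23); apply/nsat_fexcept; right.
have step2 : mods (contr Psi a) w2 -> mods (contr Psi a) w1.
  by move=> Hw2; apply: (mods_contr_stronger Ha12 Hw2 _ H12); apply/nsat_fexcept; right.
have step1 : mods (contr Psi a) w1 -> mods (contr Psi (fexcept w1 w3)) w1.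
  by move=> Hw; apply: (mods_contr_weaker Ha13 Hw); apply/nsat_fexcept; left.
have [w Hw /negP Hwa] := mods_contr_success Psi Hw1a.
have : w = w1 \/ w = w2 \/ w = w3.
  by apply: NNPP=> Hne; apply/Hwa/sat_a; split=> Heq; apply: Hne; auto.
by case=> [|[|]] Heq; subst w; auto.
Qed.

Lemma contr_order_total Psi w1 w2 : contr_order Psi w1 w2 \/ contr_order Psi w2 w1.
Proof.
have Hw1 : ~~ sat w1 (fexcept w1 w2) by apply/nsat_fexcept; left.
have [w Hw /nsat_fexcept [] Heq] := mods_contr_success Psi Hw1; subst w; first by left.
by right; apply: mods_contr_equiv (fexceptC w1 w2) Hw.
Qed.

Lemma contr_order_faithful : faithful_assignment Bel contr_order.
Proof.
split; first by move=> Psi; split; [exact: contr_order_trans | exact: contr_order_total].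
split=> Psi w1 w2 Hw1 Hw2; first by split; apply: mods_contr.
split=> [|Hw21]; first exact: mods_contr.
by apply/Hw2/(mods_contr_vacuous Hw1 _ Hw21)/nsat_fexcept; right.
Qed.

Lemma contr_order_represents : represents Bel contr contr_order.
Proof.
move=> Psi a w; split=> [Hw | [HPsi | [Ha Hmin]]]; last 2 first.
- exact: mods_contr.
- have [w0 Hw0 Ha0] := mods_contr_success Psi Ha.
  apply: (mods_contr_stronger _ Hw0 _ (Hmin w0 Ha0)).
    exact: fentails_fexcept.
  by apply/nsat_fexcept; right.
case: (classic (mods Psi w)) => HPsi; [by left | right].
have Ha : ~~ sat w a by apply/negP=> Ha; apply/HPsi/(mods_contr_recovery Hw).
split=> // w' Ha'; apply: (mods_contr_weaker _ Hw); last by apply/nsat_fexcept; left.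
exact: fentails_fexcept.
Qed.

End AGM.

Lemma contr_order_C8 : C8 Bel contr ->
  forall Psi a w1 w2, sat w1 a -> sat w2 a ->
  contr_order (contr Psi a) w1 w2 <-> contr_order Psi w1 w2.
Proof.
move=> H8 Psi a w1 w2 Hw1 Hw2.
have Hna : fentails (fNeg a) (fexcept w1 w2) by apply: fentails_fexcept; rewrite /= negbK.
exact: (H8 Psi a _ Hna w1 Hw1).
Qed.

Lemma contr_order_C9 : C9 Bel contr ->
  forall Psi a w1 w2, ~~ sat w1 a -> ~~ sat w2 a ->
  contr_order (contr Psi a) w1 w2 <-> contr_order Psi w1 w2.
Proof.
move=> H9 Psi a w1 w2 Hw1 Hw2.
have Hw1' : sat w1 (fNeg (fexcept w1 w2)) by apply/nsat_fexcept; left.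
exact: (H9 Psi a _ (fentails_fexcept Hw1 Hw2) w1 Hw1').
Qed.

Lemma contr_order_CR11 : C11 Bel contr -> CR11 contr contr_order.
Proof. by move/C11_mods=> H11 Psi a w1 w2 Hw1 _ /H11; apply. Qed.

Lemma contr_order_CR10 : C10 Bel contr -> C11 Bel contr -> CR10 contr contr_order.
Proof.
move=> H10 H11 Psi a w1 w2 Hw1 Hw2 [H12 Hn21].
split=> [|H21]; first exact: contr_order_CR11 H12.
by apply/Hn21/(proj1 C10_mods H10 _ _ _ _ H21).
Qed.

Section Representation.
Variable le : E -> world Sigma -> world Sigma -> Prop.
Hypotheses (Hfaith : faithful_assignment Bel le) (Hrep : represents Bel contr le).

Lemma faithful_represents_contr_order Psi w1 w2 :
  le Psi w1 w2 <-> contr_order Psi w1 w2.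
Proof.
case: Hfaith => [Htp [Hsim Hlt]]; rewrite /contr_order Hrep; split.
- move=> H12; right; split=> [|w /nsat_fexcept [] ->] //.
    by apply/nsat_fexcept; left.
  by case: (proj2 (Htp Psi) w1 w1).
- case=> [Hw1 | [_ Hmin]]; last by apply/Hmin/nsat_fexcept; right.
  case: (classic (mods Psi w2)) => Hw2; first exact: (Hsim _ _ _ Hw1 Hw2).1.
  exact: (Hlt _ _ _ Hw1 Hw2).1.
Qed.

Lemma mods_iter_contr_CR10 : C8 Bel contr -> CR10 contr le ->
  forall Psi a b w, mods (contr (contr Psi a) b) w -> sat w a -> mods (contr Psi b) w.
Proof.
move=> H8 HCR10 Psi a b w Hw Ha; apply/Hrep.
case/Hrep: Hw => [/Hrep [HPsi | [Hna _]] | [Hb Hmin]]; first by left.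
  by rewrite /= Ha in Hna.
right; split=> // w' Hb'; case: (boolP (sat w' a)) => Ha'.
- apply/faithful_represents_contr_order/(contr_order_C8 H8 _ Ha Ha').
  exact/faithful_represents_contr_order/Hmin.
- apply: NNPP=> Hww'.
  have Hw'w : strict (le Psi) w' w.
    by split=> //; case: (proj2 (Hfaith.1 Psi) w w').
  by case: (HCR10 _ _ _ _ Ha' Ha Hw'w) => _; apply; apply: Hmin.
Qed.

Lemma mods_iter_contr_CR11 : C9 Bel contr -> CR11 contr le ->
  forall Psi a b w, mods (contr Psi b) w -> ~~ sat w a -> mods (contr (contr Psi a) b) w.
Proof.
move=> H9 HCR11 Psi a b w Hw Ha; apply/Hrep.
case/Hrep: Hw => [HPsi | [Hb Hmin]]; first by left; apply/Hrep; left.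
right; split=> // w' Hb'; case: (boolP (sat w' a)) => Ha'.
- exact: (HCR11 _ _ _ _ Ha Ha' (Hmin _ Hb')).
- apply/faithful_represents_contr_order/(contr_order_C9 H9 _ Ha Ha').
  exact/faithful_represents_contr_order/Hmin.
Qed.

End Representation.
End Contraction.

Theorem mainTheorem8 (Sigma : finType) (HSigma : 0 < #|Sigma|)
  (E : Type) (Bel : E -> fset Sigma)
  (Hclosed : forall Psi, deductively_closed (Bel Psi))
  (contr : E -> form Sigma -> E) :
  AGM_contraction Bel contr -> C8 Bel contr -> C9 Bel contr ->
  ((C10 Bel contr /\ C11 Bel contr) <->
   exists le : E -> world Sigma -> world Sigma -> Prop,
     faithful_assignment Bel le /\ represents Bel contr le /\
     CR10 contr le /\ CR11 contr le).
Proof.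
move=> [H1 [H2 [H3 [H4 [H5 [H6 H7]]]]]] H8 H9.
split=> [[H10 H11] | [le [Hfaith [Hrep [HCR10 HCR11]]]]].
- exists (contr_order Bel contr); split; first exact: contr_order_faithful.
  split; first exact: contr_order_represents.
  by split; [apply: contr_order_CR10 | apply: contr_order_CR11].
- split; [apply/(C10_mods contr Hclosed) | apply/(C11_mods contr Hclosed)].
  + exact: mods_iter_contr_CR10 Hfaith Hrep H8 HCR10.
  + exact: mods_iter_contr_CR11 Hfaith Hrep H9 HCR11.
Qed.
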